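(* Let $A$ and $B$ be self-adjoint operators on the same complex Hilbert space, and suppose that $B$ is bounded and non-negative. If $\sigma(A + tB) = \sigma(A)$ for all $t \in \mathbb{R}$, then $B = 0$ or $\sigma(A) = \mathbb{R}$.
   Context: $\sigma(T)$ denotes the spectrum of an operator $T$. $A$ may be unbounded; $A+tB$ is defined on the domain of $A$. *)

From HB Require Import structures.
From mathcomp Require Import all_boot all_order all_algebra.
From mathcomp Require Import reals complex.
Set Implicit Arguments. Unset Strict Implicit. Unset Printing Implicit Defensive.
Import Order.TTheory GRing.Theory Num.Theory.
Local Open Scope ring_scope.

Section Hilbert.
Variables (R : realType) (H : lmodType R[i]) (ip : H -> H -> R[i]).

Definition is_inner_product : Prop :=
  [/\ (forall (a : R[i]) (x y z : H), ip (a *: x + y) z = a * ip x z + ip y z),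
      (forall x y : H, ip y x = Num.conj (ip x y)),
      (forall x : H, 0 <= ip x x) &
      (forall x : H, ip x x = 0 -> x = 0)].

Definition hnorm (x : H) : R[i] := sqrtC (ip x x).

Definition is_complete : Prop :=
  forall u : nat -> H,
    (forall e : R[i], 0 < e -> exists N : nat, forall m n : nat,
        (N <= m)%N -> (N <= n)%N -> hnorm (u m - u n) < e) ->
    exists l : H, forall e : R[i], 0 < e -> exists N : nat, forall n : nat,
        (N <= n)%N -> hnorm (u n - l) < e.

Definition is_hilbert : Prop := is_inner_product /\ is_complete.

Definition linear_on (D : H -> Prop) (T : H -> H) : Prop :=
  [/\ D 0,
      (forall (a : R[i]) (x y : H), D x -> D y -> D (a *: x + y)) &
      (forall (a : R[i]) (x y : H), D x -> D y -> T (a *: x + y) = a *: T x + T y)].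

Definition dense (D : H -> Prop) : Prop :=
  forall (x : H) (e : R[i]), 0 < e -> exists y : H, D y /\ hnorm (x - y) < e.

(* self-adjoint: densely defined, D(T^* ) = D(T) and T^* = T on it, where
   D(T^* ) = { y | exists z, forall x in D(T), <T x, y> = <x, z> } and T^* y = z *)
Definition self_adjoint (D : H -> Prop) (T : H -> H) : Prop :=
  [/\ linear_on D T, dense D,
      (forall y : H, D y <-> exists z : H, forall x : H, D x -> ip (T x) y = ip x z) &
      (forall x y : H, D x -> D y -> ip (T x) y = ip x (T y))].

Definition bounded (T : H -> H) : Prop :=
  exists M : R[i], forall x : H, hnorm (T x) <= M * hnorm x.

Definition nonneg_op (T : H -> H) : Prop := forall x : H, 0 <= ip (T x) x.

Definition in_resolvent (D : H -> Prop) (T : H -> H) (l : R[i]) : Prop :=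
  exists S : H -> H,
    [/\ (forall y : H, D (S y) /\ T (S y) - l *: S y = y),
        (forall x : H, D x -> S (T x - l *: x) = x) &
        bounded S].

Definition in_spectrum (D : H -> Prop) (T : H -> H) (l : R[i]) : Prop :=
  ~ in_resolvent D T l.

End Hilbert.

(* Non-real points always lie in the resolvent set of a self-adjoint operator, so if
   sigma(A) <> R some real a is outside sigma(A), hence outside sigma(A + t B) for every
   real t.  Let S = (A - a)^-1.  The form x |-> <S B x, B x> must vanish: if
   sg <S B x, B x> > 0 somewhere (sg = 1 or -1), let q > 0 be the supremum of
   sg <S B x, B x> / <B x, x>; then q B - sg B S B >= 0, and for near-maximising x the
   vector u = S B x satisfies (A - (sg/q) B - a) u ~ 0 while sg <u, B x> ~ q, which
   contradicts a being outside sigma(A - (sg/q) B).  The same holds at a nearby real point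
   a + d, and comparing S B x with (A - a - d)^-1 B x through the resolvent identity
   gives B x = 0. *)

From HB Require Import structures.
From mathcomp Require Import all_boot all_order all_algebra.
From mathcomp Require Import boolp classical_sets reals complex.
From mathcomp Require Import ring lra.
Set Implicit Arguments. Unset Strict Implicit. Unset Printing Implicit Defensive.
Import Order.TTheory GRing.Theory Num.Theory.
Local Open Scope ring_scope.

Local Notation re := complex.Re.
Local Notation im := complex.Im.

Section ComplexParts.
Variable R : realType.
Implicit Types (x y : R[i]) (r : R).

Lemma ReMc x y : re (x * y) = re x * re y - im x * im y.
Proof. by case: x y => a b [c d]. Qed.
Lemma ImMc x y : im (x * y) = re x * im y + im x * re y.
Proof. by case: x y => a b [c d]. Qed.
Lemma ReDc x y : re (x + y) = re x + re y. Proof. by case: x y => a b [c d]. Qed.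
Lemma ImDc x y : im (x + y) = im x + im y. Proof. by case: x y => a b [c d]. Qed.
Lemma ReNc x : re (- x) = - re x. Proof. by case: x. Qed.
Lemma ImNc x : im (- x) = - im x. Proof. by case: x. Qed.
Lemma ReBc x y : re (x - y) = re x - re y. Proof. by rewrite ReDc ReNc. Qed.
Lemma ImBc x y : im (x - y) = im x - im y. Proof. by rewrite ImDc ImNc. Qed.
Lemma ReJc x : re (Num.conj x) = re x. Proof. by case: x. Qed.
Lemma ImJc x : im (Num.conj x) = - im x. Proof. by case: x. Qed.

Lemma complex_ext x y : re x = re y -> im x = im y -> x = y.
Proof. by case: x y => a b [c d] /= -> ->. Qed.

Lemma conjc_realC r : Num.conj (r%:C%C : R[i]) = r%:C%C.
Proof. by apply: complex_ext => //=; rewrite oppr0. Qed.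

Lemma ge0_complexE x : 0 <= x -> x = (re x)%:C%C /\ 0 <= re x.
Proof.
rewrite lecE /= => /andP[/eqP him hre]; split => //.
by apply: complex_ext => //=; rewrite him.
Qed.

Lemma gt0_complexE x : 0 < x -> x = (re x)%:C%C /\ 0 < re x.
Proof.
rewrite ltcE /= => /andP[/eqP him hre]; split => //.
by apply: complex_ext => //=; rewrite him.
Qed.

Lemma sqrtC_realC r : 0 <= r -> sqrtC (r%:C%C) = (Num.sqrt r)%:C%C.
Proof.
move=> hr; have -> : (r%:C%C : R[i]) = ((Num.sqrt r)%:C%C) ^+ 2.
  by rewrite -rmorphXn /= sqr_sqrtr.
by rewrite sqrCK // lecR sqrtr_ge0.
Qed.

End ComplexParts.

Section InnerProduct.
Variables (R : realType) (H : lmodType R[i]) (ip : H -> H -> R[i]).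
Hypothesis hip : is_inner_product ip.
Implicit Types (x y z : H) (a : R[i]).

Definition sqnorm x : R := re (ip x x).

Lemma ipDZl a x y z : ip (a *: x + y) z = a * ip x z + ip y z.
Proof. by case: hip. Qed.
Lemma ipC x y : ip y x = Num.conj (ip x y).
Proof. by case: hip. Qed.
Lemma ip0l z : ip 0 z = 0.
Proof.
have := ipDZl 1 0 0 z; rewrite scaler0 addr0 mul1r.
by rewrite -{1}[ip 0 z]addr0 => /addrI ->.
Qed.
Lemma ipDl x y z : ip (x + y) z = ip x z + ip y z.
Proof. by rewrite -[x]scale1r ipDZl mul1r scale1r. Qed.
Lemma ipZl a x z : ip (a *: x) z = a * ip x z.
Proof. by rewrite -[a *: x]addr0 ipDZl ip0l addr0. Qed.
Lemma ipNl x z : ip (- x) z = - ip x z.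
Proof. by rewrite -scaleN1r ipZl mulN1r. Qed.
Lemma ipBl x y z : ip (x - y) z = ip x z - ip y z.
Proof. by rewrite ipDl ipNl. Qed.
Lemma ipDr x y z : ip z (x + y) = ip z x + ip z y.
Proof. by rewrite ipC ipDl rmorphD /= -!ipC. Qed.
Lemma ipZr a x z : ip z (a *: x) = Num.conj a * ip z x.
Proof. by rewrite ipC ipZl rmorphM /= -ipC. Qed.
Lemma ipNr x z : ip z (- x) = - ip z x.
Proof. by rewrite ipC ipNl rmorphN /= -ipC. Qed.
Lemma ipBr x y z : ip z (x - y) = ip z x - ip z y.
Proof. by rewrite ipDr ipNr. Qed.

Lemma Re_ipC x y : re (ip y x) = re (ip x y).
Proof. by rewrite ipC ReJc. Qed.
Lemma Im_ipC x y : im (ip y x) = - im (ip x y).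
Proof. by rewrite ipC ImJc. Qed.
Lemma Re_ipZl a x y : re (ip (a *: x) y) = re a * re (ip x y) - im a * im (ip x y).
Proof. by rewrite ipZl ReMc. Qed.
Lemma Re_ipZr a x y : re (ip x (a *: y)) = re a * re (ip x y) + im a * im (ip x y).
Proof. rewrite ipZr ReMc ReJc ImJc; lra. Qed.
Lemma Im_ipZr a x y : im (ip x (a *: y)) = re a * im (ip x y) - im a * re (ip x y).
Proof. rewrite ipZr ImMc ReJc ImJc; lra. Qed.

Lemma ipxx_ge0 x : 0 <= ip x x.
Proof. by case: hip. Qed.
Lemma ipxxE x : ip x x = (sqnorm x)%:C%C.
Proof. by case: (ge0_complexE (ipxx_ge0 x)). Qed.
Lemma sqnorm_ge0 x : 0 <= sqnorm x.
Proof. by case: (ge0_complexE (ipxx_ge0 x)). Qed.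
Lemma sqnorm_eq0 x : sqnorm x = 0 -> x = 0.
Proof. by move=> h; case: hip => _ _ _; apply; rewrite ipxxE h. Qed.
Lemma sqnorm0 : sqnorm 0 = 0.
Proof. by rewrite /sqnorm ip0l. Qed.

Lemma sqnormD x y : sqnorm (x + y) = sqnorm x + sqnorm y + 2 * re (ip x y).
Proof. rewrite /sqnorm ipDl !ipDr !ReDc (Re_ipC x y); lra. Qed.
Lemma sqnormB x y : sqnorm (x - y) = sqnorm x + sqnorm y - 2 * re (ip x y).
Proof. rewrite /sqnorm ipBl !ipBr !ReBc ?ReDc ?ReNc (Re_ipC x y); lra. Qed.
Lemma sqnormZ a x : sqnorm (a *: x) = (re a ^+ 2 + im a ^+ 2) * sqnorm x.
Proof.
rewrite /sqnorm Re_ipZl Re_ipZr Im_ipZr.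
have -> : im (ip x x) = 0 by rewrite ipxxE.
rewrite /sqnorm; lra.
Qed.
Lemma sqnormZ_real (r : R) x : sqnorm (r%:C%C *: x) = r ^+ 2 * sqnorm x.
Proof. rewrite sqnormZ /=; lra. Qed.
Lemma Re_ipZ_real (r : R) x y : re (ip (r%:C%C *: x) (r%:C%C *: y)) = r ^+ 2 * re (ip x y).
Proof. rewrite Re_ipZl Re_ipZr Im_ipZr /=; lra. Qed.
Lemma sqnormN x : sqnorm (- x) = sqnorm x.
Proof. by rewrite /sqnorm ipNl ipNr opprK. Qed.

Lemma Re_ip_AMGM x y (e : R) : 0 < e -> 2 * re (ip x y) <= e * sqnorm x + sqnorm y / e.
Proof.
move=> he; have := sqnorm_ge0 (e%:C%C *: x - y).
rewrite sqnormB sqnormZ_real Re_ipZl /= mul0r subr0 => h.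
have h2 : 0 <= e * (e * sqnorm x + sqnorm y / e - 2 * re (ip x y)).
  have E : e * (sqnorm y / e) = sqnorm y by rewrite mulrC divfK // gt_eqF.
  by rewrite !mulrDr mulrN E; rewrite expr2 in h; lra.
by rewrite -subr_ge0; move: h2; rewrite pmulr_rge0.
Qed.

Lemma Re_ip_CauchySchwarz x y : re (ip x y) ^+ 2 <= sqnorm x * sqnorm y.
Proof.
have hx := sqnorm_ge0 x; have hy := sqnorm_ge0 y.
set c := re (ip x y).
have key s : 0 <= sqnorm x - 2 * s * c + s ^+ 2 * sqnorm y.
  have := sqnorm_ge0 (x - s%:C%C *: y).
  by rewrite sqnormB sqnormZ_real Re_ipZr /= mul0r addr0; lra.
have [hy0|hy0] := eqVneq (sqnorm y) 0.
  rewrite hy0 mulr0.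
  have [c0|cn0] := eqVneq c 0; first by rewrite c0 expr0n.
  have := key ((sqnorm x + 1) / (2 * c)).
  have -> : 2 * ((sqnorm x + 1) / (2 * c)) * c = sqnorm x + 1 by field; rewrite cn0.
  by rewrite hy0 mulr0 addr0; lra.
have hyp : 0 < sqnorm y by rewrite lt0r hy0.
have := key (c / sqnorm y).
have -> : 2 * (c / sqnorm y) * c = 2 * (c ^+ 2 / sqnorm y) by field.
have -> : (c / sqnorm y) ^+ 2 * sqnorm y = c ^+ 2 / sqnorm y by field.
move=> h.
have h2 : 0 <= sqnorm y * (sqnorm x - c ^+ 2 / sqnorm y) by rewrite mulr_ge0 //; lra.
have E : sqnorm y * (sqnorm x - c ^+ 2 / sqnorm y) = sqnorm x * sqnorm y - c ^+ 2.
  by field.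
lra.
Qed.

Lemma sqnormD_le x y (e : R) : 0 < e ->
  sqnorm (x + y) <= (1 + e) * sqnorm x + (1 + e^-1) * sqnorm y.
Proof.
move=> he; rewrite sqnormD.
have := Re_ip_AMGM x y he.
by rewrite mulrDl mul1r mulrDl mul1r (mulrC _ (sqnorm y)); lra.
Qed.

Lemma sqnormD_le2 x y : sqnorm (x + y) <= 2 * sqnorm x + 2 * sqnorm y.
Proof. by have := sqnormD_le x y ltr01; rewrite invr1; lra. Qed.

End InnerProduct.

Section NormAndLimits.
Variables (R : realType) (H : lmodType R[i]) (ip : H -> H -> R[i]).
Hypothesis hip : is_inner_product ip.
Local Notation sqnorm := (sqnorm ip).

Definition cvg_to (u : nat -> H) (l : H) :=
  forall eps : R, 0 < eps -> exists N, forall n, (N <= n)%N -> sqnorm (u n - l) < eps.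

Definition cauchy (u : nat -> H) :=
  forall eps : R, 0 < eps ->
    exists N, forall m n, (N <= m)%N -> (N <= n)%N -> sqnorm (u m - u n) < eps.

Lemma hnormE x : hnorm ip x = (Num.sqrt (sqnorm x))%:C%C.
Proof. by rewrite /hnorm (ipxxE hip) sqrtC_realC // (sqnorm_ge0 hip). Qed.

Lemma hnorm_lt x (r : R) : 0 < r -> (hnorm ip x < r%:C%C) <-> sqnorm x < r ^+ 2.
Proof.
move=> hr; rewrite hnormE ltcR.
rewrite -{1}(gtr0_norm hr) -sqrtr_sqr ltr_sqrt ?exprn_gt0 //.
Qed.

Lemma hnorm_lt_sqrt x (eps : R) : 0 < eps ->
  (hnorm ip x < (Num.sqrt eps)%:C%C) <-> sqnorm x < eps.
Proof. by move=> he; rewrite hnorm_lt ?sqrtr_gt0 // sqr_sqrtr // ltW. Qed.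

Lemma cauchy_cvg (u : nat -> H) : is_complete ip -> cauchy u -> exists l, cvg_to u l.
Proof.
move=> hc hu.
have [l hl] : exists l : H, forall e : R[i], 0 < e ->
    exists N : nat, forall n : nat, (N <= n)%N -> hnorm ip (u n - l) < e.
  apply: hc => e /gt0_complexE [-> he].
  have [N hN] := hu _ (exprn_gt0 2 he).
  by exists N => m n hm hn; apply/hnorm_lt => //; exact: hN.
exists l => eps heps.
have hs : 0 < (Num.sqrt eps)%:C%C :> R[i] by rewrite ltcR sqrtr_gt0.
have [N hN] := hl _ hs.
by exists N => n hn; apply/(hnorm_lt_sqrt _ heps); exact: hN.
Qed.

Lemma dense_sqnorm (D : H -> Prop) : dense ip D ->
  forall x (eps : R), 0 < eps -> exists y, D y /\ sqnorm (x - y) < eps.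
Proof.
move=> hd x eps heps.
have hs : 0 < (Num.sqrt eps)%:C%C :> R[i] by rewrite ltcR sqrtr_gt0.
have [y [hy1 hy2]] := hd x _ hs.
by exists y; split => //; apply/(hnorm_lt_sqrt _ heps).
Qed.

Lemma dense_orth0 (D : H -> Prop) w : dense ip D ->
  (forall y, D y -> ip y w = 0) -> w = 0.
Proof.
move=> hd h; apply: (sqnorm_eq0 hip); apply/eqP; rewrite eq_le (sqnorm_ge0 hip) andbT.
rewrite leNgt; apply/negP => hw.
have [y [hy1 hy2]] := dense_sqnorm hd w hw.
have := Re_ip_AMGM hip (w - y) w ltr01.
by rewrite (ipBl hip) (h y hy1) subr0 mul1r divr1; lra.
Qed.

Lemma bounded_sqnorm (S : H -> H) :
  bounded ip S -> exists K : R, 0 <= K /\ forall x, sqnorm (S x) <= K * sqnorm x.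
Proof.
case=> M hM.
have [[x0 hx0]|allz] := EM (exists x, sqnorm x <> 0); last first.
  exists 0; split => // x; rewrite mul0r.
  suff -> : sqnorm (S x) = 0 by [].
  by apply: contrapT => hx; apply: allz; exists (S x).
have hs0 : 0 < Num.sqrt (sqnorm x0).
  by rewrite sqrtr_gt0 lt0r (sqnorm_ge0 hip) andbT; apply/eqP.
have hMr : M = (re M)%:C%C.
  have := hM x0; rewrite -subr_ge0 => /ger0_Im.
  rewrite ImBc !hnormE ImMc /= mulr0 add0r subr0 => /eqP.
  rewrite mulf_eq0 (gt_eqF hs0) orbF => /eqP him.
  by apply: complex_ext.
exists (re M ^+ 2); split; first exact: sqr_ge0.
move=> x; have := hM x; rewrite hMr !hnormE -rmorphM /= lecR => h.
have h0 := sqrtr_ge0 (sqnorm (S x)).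
have h1 : 0 <= re M * Num.sqrt (sqnorm x) by apply: le_trans h.
have h2 : Num.sqrt (sqnorm (S x)) ^+ 2 <= (re M * Num.sqrt (sqnorm x)) ^+ 2 by nra.
by move: h2; rewrite exprMn !sqr_sqrtr // (sqnorm_ge0 hip).
Qed.

Lemma bounded_of_sqnorm (S : H -> H) (K : R) :
  0 <= K -> (forall x, sqnorm (S x) <= K * sqnorm x) -> bounded ip S.
Proof.
move=> hK h; exists (Num.sqrt K)%:C%C => x.
rewrite !hnormE -rmorphM /= lecR -sqrtrM // ler_sqrt //.
by rewrite mulr_ge0 // (sqnorm_ge0 hip).
Qed.

Lemma sqnorm_le_of_approx (x : H) (b : R) : 0 <= b ->
  (forall d : R, 0 < d -> exists v, sqnorm (x - v) < d /\ sqnorm v < b + d) ->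
  sqnorm x <= b.
Proof.
move=> hb h; apply/ler_addgt0Pr => e he.
set eta := e / (b + 4 + e).
have hden : 0 < b + 4 + e by lra.
have heta : 0 < eta by rewrite divr_gt0.
have hetaE : eta * (b + 4 + e) = e by rewrite /eta divfK // gt_eqF.
have heta1 : eta <= 1 by rewrite ler_pdivrMr //; lra.
have [v [hv1 hv2]] := h (eta ^+ 2) (exprn_gt0 2 heta).
have := sqnormD_le hip v (x - v) heta; rewrite addrC subrK => hs.
have h1 : (1 + eta) * sqnorm v <= (1 + eta) * (b + eta ^+ 2).
  by apply: (ler_wpM2l _ (ltW hv2)); lra.
have h2 : (1 + eta^-1) * sqnorm (x - v) <= eta ^+ 2 + eta.
  have -> : eta ^+ 2 + eta = (1 + eta^-1) * eta ^+ 2 by field; rewrite gt_eqF.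
  by apply: (ler_wpM2l _ (ltW hv1)); rewrite addr_ge0 // invr_ge0 ltW.
have hX n : (0 < n)%N -> eta ^+ n <= eta.
  by move=> hn; rewrite -[leRHS]expr1; apply: ler_wiXn2l => //; exact: ltW.
have h3 := hX 3%N isT; have h4 := hX 2%N isT.
have E : (1 + eta) * (b + eta ^+ 2) = b + eta * b + eta ^+ 2 + eta ^+ 3 by ring.
nra.
Qed.

Lemma Re_ip_cvg0 (u : H) (xs : nat -> H) x : cvg_to xs x ->
  forall eps : R, 0 < eps -> exists N, forall k, (N <= k)%N -> re (ip u (xs k - x)) ^+ 2 < eps.
Proof.
move=> hx eps he.
have hu1 : 0 < sqnorm u + 1 by have := sqnorm_ge0 hip u; lra.
have [N hN] := hx _ (divr_gt0 he hu1).
exists N => k hk; apply: le_lt_trans (Re_ip_CauchySchwarz hip _ _) _.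
have hlt : sqnorm u * sqnorm (xs k - x) <= sqnorm u * (eps / (sqnorm u + 1)).
  by rewrite ler_wpM2l ?(sqnorm_ge0 hip) // ltW // hN.
apply: le_lt_trans hlt _; rewrite mulrA ltr_pdivrMr // mulrDr mulr1.
lra.
Qed.

Lemma cvg_cauchy (u : nat -> H) l : cvg_to u l -> cauchy u.
Proof.
move=> hu e he; have [N hN] := hu _ (divr_gt0 he (ltr0n R 4)).
exists N => m n hm hn.
have := sqnormD_le2 hip (u m - l) (l - u n); rewrite addrA subrK.
by rewrite -[l - u n]opprB (sqnormN hip); have := hN m hm; have := hN n hn; lra.
Qed.

Lemma cvg_toDZ (u v : nat -> H) x y (c : R[i]) : cvg_to u x -> cvg_to v y ->
  cvg_to (fun k => u k + c *: v k) (x + c *: y).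
Proof.
move=> hu hv e he; set L := re c ^+ 2 + im c ^+ 2.
have hL0 : 0 <= L by rewrite /L addr_ge0 ?sqr_ge0.
have hL : 0 < 4 * (L + 1) by lra.
have [N1 hN1] := hu _ (divr_gt0 he (ltr0n R 4)).
have [N2 hN2] := hv _ (divr_gt0 he hL).
exists (maxn N1 N2) => k hk.
have -> : u k + c *: v k - (x + c *: y) = (u k - x) + c *: (v k - y).
  by rewrite scalerBr opprD addrACA.
apply: le_lt_trans (sqnormD_le2 hip _ _) _; rewrite (sqnormZ hip) -/L.
have h1 := hN1 k (leq_trans (leq_maxl _ _) hk).
have h2 : L * sqnorm (v k - y) <= L * (e / (4 * (L + 1))).
  by rewrite ler_wpM2l // ltW // hN2 // (leq_trans (leq_maxr _ _) hk).
have h3 : L * (e / (4 * (L + 1))) <= e / 4.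
  rewrite mulrA ler_pdivrMr //.
  have -> : e / 4 * (4 * (L + 1)) = L * e + e by field.
  lra.
lra.
Qed.

Lemma bounded_comp (F G : H -> H) : bounded ip F -> bounded ip G -> bounded ip (F \o G).
Proof.
move=> /bounded_sqnorm[KF [hKF hF]] /bounded_sqnorm[KG [hKG hG]].
apply: (bounded_of_sqnorm (K := KF * KG)); first exact: mulr_ge0.
move=> x; apply: le_trans (hF _) _.
have -> : KF * KG * sqnorm x = KF * (KG * sqnorm x) by ring.
by rewrite ler_wpM2l.
Qed.

Lemma bounded_lincomb (F G : H -> H) (c d : R[i]) :
  bounded ip F -> bounded ip G -> bounded ip (fun x => c *: F x + d *: G x).
Proof.
move=> /bounded_sqnorm[KF [hKF hF]] /bounded_sqnorm[KG [hKG hG]].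
set L := re c ^+ 2 + im c ^+ 2; set M := re d ^+ 2 + im d ^+ 2.
have hL : 0 <= L by rewrite /L addr_ge0 ?sqr_ge0.
have hM : 0 <= M by rewrite /M addr_ge0 ?sqr_ge0.
apply: (bounded_of_sqnorm (K := 2 * (L * KF) + 2 * (M * KG))).
  by rewrite addr_ge0 // mulr_ge0 // mulr_ge0.
move=> x; apply: le_trans (sqnormD_le2 hip _ _) _; rewrite !(sqnormZ hip) -/L -/M.
have h1 : L * sqnorm (F x) <= L * (KF * sqnorm x) by rewrite ler_wpM2l.
have h2 : M * sqnorm (G x) <= M * (KG * sqnorm x) by rewrite ler_wpM2l.
have -> : (2 * (L * KF) + 2 * (M * KG)) * sqnorm x =
    2 * (L * (KF * sqnorm x)) + 2 * (M * (KG * sqnorm x)) by ring.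
lra.
Qed.

End NormAndLimits.

Section LinearOn.
Variables (R : realType) (H : lmodType R[i]) (D : H -> Prop) (T : H -> H).
Hypothesis hT : linear_on D T.
Implicit Types (x y : H) (a : R[i]).

Lemma dom0 : D 0. Proof. by case: hT. Qed.
Lemma domDZ a x y : D x -> D y -> D (a *: x + y). Proof. by case: hT => _ h _; apply: h. Qed.
Lemma linDZ a x y : D x -> D y -> T (a *: x + y) = a *: T x + T y.
Proof. by case: hT => _ _ h; apply: h. Qed.

Lemma domZ a x : D x -> D (a *: x).
Proof. by move=> hx; rewrite -[a *: x]addr0; apply: domDZ => //; exact: dom0. Qed.
Lemma domD x y : D x -> D y -> D (x + y).
Proof. by move=> hx hy; rewrite -[x]scale1r; apply: domDZ. Qed.
Lemma domB x y : D x -> D y -> D (x - y).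
Proof. by move=> hx hy; rewrite -scaleN1r addrC; apply: domDZ. Qed.

Lemma lin0 : T 0 = 0.
Proof.
have := linDZ 1 dom0 dom0; rewrite scaler0 addr0 scale1r.
by rewrite -{1}[T 0]addr0 => /addrI /esym.
Qed.
Lemma linZ a x : D x -> T (a *: x) = a *: T x.
Proof. by move=> hx; have := linDZ a hx dom0; rewrite !addr0 lin0 addr0. Qed.
Lemma linB x y : D x -> D y -> T (x - y) = T x - T y.
Proof. by move=> hx hy; rewrite -scaleN1r addrC linDZ // scaleN1r addrC. Qed.

End LinearOn.

Lemma linear_on_shift (R : realType) (H : lmodType R[i]) (D : H -> Prop) (T : H -> H)
  (l : R[i]) : linear_on D T -> linear_on D (fun x => T x - l *: x).
Proof.
move=> hT; split; [exact: dom0 hT | exact: domDZ hT |].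
move=> a x y hx hy; rewrite (linDZ hT) // scalerDr scalerBr !scalerA [l * a]mulrC.
by rewrite opprD addrACA.
Qed.

Section TotalLinear.
Variables (R : realType) (H : lmodType R[i]).
Local Notation total := (fun _ : H => True).

Lemma linear_on_comp (F G : H -> H) :
  linear_on total F -> linear_on total G -> linear_on total (F \o G).
Proof. by move=> hF hG; split => // a x y _ _ /=; rewrite (linDZ hG) // (linDZ hF). Qed.

Lemma linear_on_lincomb (F G : H -> H) (c d : R[i]) :
  linear_on total F -> linear_on total G -> linear_on total (fun x => c *: F x + d *: G x).
Proof.
move=> hF hG; split => // a x y _ _; rewrite (linDZ hF) // (linDZ hG) //.
by rewrite !scalerDr !scalerA [c * a]mulrC [d * a]mulrC addrACA.
Qed.

End TotalLinear.

Section SelfAdjoint.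
Variables (R : realType) (H : lmodType R[i]) (ip : H -> H -> R[i]).
Hypothesis hip : is_inner_product ip.
Local Notation sqnorm := (sqnorm ip).
Variables (D : H -> Prop) (A : H -> H).
Hypothesis hA : self_adjoint ip D A.

Lemma sa_linear : linear_on D A. Proof. by case: hA. Qed.

Lemma sa_sym x y : D x -> D y -> ip (A x) y = ip x (A y).
Proof. by case: hA => _ _ _ h; apply: h. Qed.

Lemma sa_adjointE y z : (forall x, D x -> ip (A x) y = ip x z) -> D y /\ A y = z.
Proof.
move=> hyz; have hy : D y by case: hA => _ _ h _; apply/h; exists z.
have hd : dense ip D by case: hA.
split => //; apply/eqP; rewrite -subr_eq0; apply/eqP; apply: (dense_orth0 hip hd) => x hx.
by rewrite (ipBr hip) -sa_sym // hyz // subrr.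
Qed.

Lemma sa_closed (xs : nat -> H) x z : (forall k, D (xs k)) ->
  cvg_to ip xs x -> cvg_to ip (fun k => A (xs k)) z -> D x /\ A x = z.
Proof.
move=> hD hx hz; apply: sa_adjointE => w hw.
suff hre v : D v -> re (ip (A v) x) = re (ip v z).
  apply: complex_ext; first exact: hre.
  have := hre _ (domZ sa_linear 'i%C hw).
  by rewrite (linZ sa_linear _ hw) (Re_ipZl hip) (Re_ipZl hip) /=; lra.
move=> hv; apply/eqP; rewrite -subr_eq0; apply/eqP.
set d := _ - _; have [//|dn0] := eqVneq d 0.
have he : 0 < d ^+ 2 / 4 by rewrite divr_gt0 // lt0r sqrf_eq0 dn0 sqr_ge0.
have [N1 hN1] := Re_ip_cvg0 hip (A v) hx he.
have [N2 hN2] := Re_ip_cvg0 hip v hz he.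
pose k := maxn N1 N2.
have h1 := hN1 k (leq_maxl _ _); have h2 := hN2 k (leq_maxr _ _).
have Ed : d = re (ip v (A (xs k) - z)) - re (ip (A v) (xs k - x)).
  by rewrite /d !(ipBr hip) !ReBc (sa_sym hv (hD k)); lra.
have : d ^+ 2 < d ^+ 2 by rewrite {1}Ed; nra.
by rewrite ltxx.
Qed.

End SelfAdjoint.

Lemma eq0_of_quad_ge0 (R : realType) (N r : R) :
  0 <= N -> (forall s, 0 <= s ^+ 2 * N + 2 * s * r) -> r = 0.
Proof.
move=> hN h; set t := r / (N + 1).
have hN1 : 0 < N + 1 by lra.
have hr : r = t * (N + 1) by rewrite /t divfK // gt_eqF.
have := h (- t); rewrite hr => h2.
have ht : t ^+ 2 = 0 by apply/le_anti; rewrite sqr_ge0 andbT; nra.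
by move/eqP: ht; rewrite sqrf_eq0 => /eqP ->; rewrite mul0r.
Qed.

Lemma invSn_small (R : realType) (e : R) : 0 < e ->
  exists N, forall k, (N <= k)%N -> k.+1%:R^-1 < e.
Proof.
move=> he; have [N hN] := ltr_add_invr he; rewrite add0r in hN.
exists N => k hk; apply: le_lt_trans hN.
by rewrite lef_pV2 ?posrE ?ltr0n // ler_nat.
Qed.

Section Projection.
Variables (R : realType) (H : lmodType R[i]) (ip : H -> H -> R[i]).
Hypothesis hip : is_inner_product ip.
Local Notation sqnorm := (sqnorm ip).

Definition subspace (M : H -> Prop) := linear_on M id.

Definition closed_set (M : H -> Prop) :=
  forall (xs : nat -> H) x, (forall k, M (xs k)) -> cvg_to ip xs x -> M x.

Lemma parallelogram x y : sqnorm (x - y) + sqnorm (x + y) = 2 * sqnorm x + 2 * sqnorm y.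
Proof. by rewrite (sqnormB hip) (sqnormD hip); lra. Qed.

Lemma min_dist_orth (M : H -> Prop) m y : subspace M -> M m ->
  (forall z, M z -> sqnorm (m - y) <= sqnorm (z - y)) ->
  forall z, M z -> ip z (m - y) = 0.
Proof.
move=> hM hm hmin.
have hRe z : M z -> re (ip z (m - y)) = 0.
  move=> hz; apply: (eq0_of_quad_ge0 (sqnorm_ge0 hip z)) => s.
  have := hmin _ (domDZ hM s%:C%C hz hm).
  rewrite -addrA addrC [X in _ <= X](sqnormD hip) (sqnormZ_real hip) (Re_ipZr hip) /=.
  by rewrite mul0r addr0 (Re_ipC hip z); lra.
move=> z hz; apply: complex_ext; first exact: hRe.
have := hRe _ (domZ hM 'i%C hz); rewrite (Re_ipZl hip) /=; lra.
Qed.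

Lemma near_min_close (M : H -> Prop) y (d e1 e2 : R) u v : subspace M ->
  (forall z, M z -> d <= sqnorm (z - y)) -> M u -> M v ->
  sqnorm (u - y) < d + e1 -> sqnorm (v - y) < d + e2 -> sqnorm (u - v) <= 2 * e1 + 2 * e2.
Proof.
move=> hM hlow hu hv hu1 hv1.
have hmid := hlow _ (domZ hM (2^-1 : R)%:C%C (domD hM hu hv)).
have Ediff : u - y - (v - y) = u - v by rewrite opprB addrA subrK.
have Esum : u - y + (v - y) = (2 : R)%:C%C *: ((2^-1 : R)%:C%C *: (u + v) - y).
  rewrite scalerBr scalerA -rmorphM /= divff ?pnatr_eq0 // scale1r.
  by rewrite rmorph_nat scaler_nat mulr2n opprD addrACA.
have := parallelogram (u - y) (v - y).
by rewrite Ediff Esum (sqnormZ_real hip); lra.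
Qed.

Lemma min_dist_exists (M : H -> Prop) y : is_complete ip -> subspace M -> closed_set M ->
  exists m, M m /\ forall z, M z -> sqnorm (m - y) <= sqnorm (z - y).
Proof.
move=> hc hM hcl.
pose E := [set r : R | exists z, M z /\ r = sqnorm (z - y)]%classic.
have hE : has_inf E.
  split; first by exists (sqnorm (0 - y)), 0; split => //; exact: dom0 hM.
  by exists 0 => _ [z [_ ->]]; exact: sqnorm_ge0.
set d := inf E.
have hlow z : M z -> d <= sqnorm (z - y) by move=> hz; apply: ge_inf hE.2 _ _; exists z.
have hd0 : 0 <= d.
  by apply: lb_le_inf hE.1 _ => _ [z [_ ->]]; exact: sqnorm_ge0.
pose eps k : R := k.+1%:R^-1.
have heps k : 0 < eps k by rewrite invr_gt0 ltr0n.
have /choice[ms hms] k : exists z, M z /\ sqnorm (z - y) < d + eps k.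
  by have [_ [z [hz ->]] hlt] := inf_adherent (heps k) hE; exists z.
have hpar j k : sqnorm (ms j - ms k) <= 2 * eps j + 2 * eps k.
  exact: near_min_close hM hlow (hms j).1 (hms k).1 (hms j).2 (hms k).2.
have [m hm] : exists m, cvg_to ip ms m.
  apply: (cauchy_cvg hip hc) => e he.
  have [N hN] : exists N, forall k, (N <= k)%N -> eps k < e / 4.
    exact: invSn_small (divr_gt0 he (ltr0n R 4)).
  exists N => j k hj hk; apply: le_lt_trans (hpar j k) _.
  by have := hN j hj; have := hN k hk; lra.
have hMm : M m := hcl _ _ (fun k => (hms k).1) hm.
exists m; split => // z hz; apply: le_trans (hlow _ hz).
apply: (sqnorm_le_of_approx hip hd0) => e he.
have [N1 hN1] := hm e he; have [N2 hN2] := invSn_small he.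
pose k := maxn N1 N2; exists (ms k - y); split.
  by rewrite opprB addrA subrK -opprB (sqnormN hip) hN1 // leq_maxl.
by apply: lt_le_trans (hms k).2 _; rewrite lerD2l ltW // hN2 // leq_maxr.
Qed.

End Projection.

Definition range_on (R : realType) (H : lmodType R[i]) (D : H -> Prop) (T : H -> H) :=
  fun y => exists x, D x /\ T x = y.

Lemma range_subspace (R : realType) (H : lmodType R[i]) (D : H -> Prop) (T : H -> H) :
  linear_on D T -> subspace (range_on D T).
Proof.
move=> hT; split.
- by exists 0; split; [exact: dom0 hT | exact: lin0 hT].
- move=> a _ _ [x [hx <-]] [y [hy <-]]; exists (a *: x + y).
  by split; [exact: (domDZ hT) | exact: (linDZ hT)].
- by [].
Qed.

Section LowerBound.
Variables (R : realType) (H : lmodType R[i]) (ip : H -> H -> R[i]).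
Hypothesis hip : is_inner_product ip.
Hypothesis hcomp : is_complete ip.
Local Notation sqnorm := (sqnorm ip).
Variables (D : H -> Prop) (A : H -> H).
Hypothesis hA : self_adjoint ip D A.
Variables (l : R[i]) (K : R).
Hypothesis hK : 0 <= K.
Hypothesis hlb : forall x, D x -> sqnorm x <= K * sqnorm (A x - l *: x).

Let T x := A x - l *: x.
Let hT : linear_on D T := linear_on_shift l (sa_linear hA).

Lemma range_shift_closed : closed_set ip (range_on D T).
Proof.
move=> ys w hys hw.
have [xs hxs] := choice hys.
have hD k : D (xs k) := (hxs k).1.
have hTxs : cvg_to ip (fun k => T (xs k)) w.
  by move=> e he; have [N hN] := hw e he; exists N => k hk; rewrite (hxs k).2 hN.
have [x hx] : exists x, cvg_to ip xs x.
  apply: (cauchy_cvg hip hcomp) => e he.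
  have hK1 : 0 < K + 1 by have := hK; lra.
  have [N hN] := cvg_cauchy hip hTxs (divr_gt0 he hK1).
  exists N => m n hm hn; apply: le_lt_trans (hlb (domB hT (hD m) (hD n))) _.
  rewrite -/(T _) (linB hT) //.
  have := hN m n hm hn; have := sqnorm_ge0 hip (T (xs m) - T (xs n)) => h0 h1.
  have : K * sqnorm (T (xs m) - T (xs n)) <= K * (e / (K + 1)).
    by rewrite ler_wpM2l // ltW.
  have : K * (e / (K + 1)) < e.
    by rewrite mulrA ltr_pdivrMr // mulrDr mulr1 [K * e]mulrC ltrDl.
  lra.
have hAxs : cvg_to ip (fun k => A (xs k)) (w + l *: x).
  have := cvg_toDZ hip l hTxs hx.
  by congr cvg_to; apply: funext => k; rewrite /T subrK.
have [hDx hAx] := sa_closed hip hA hD hx hAxs.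
by exists x; split => //; rewrite /T hAx addrK.
Qed.

Hypothesis hlb_conj : forall x, D x -> sqnorm x <= K * sqnorm (A x - Num.conj l *: x).

(* The residual of the point of the closed range of [A - l] nearest to [y] is orthogonal
   to that range, i.e. it lies in the kernel of [A - conj l]. *)
Lemma shift_surjective y : exists x, D x /\ T x = y.
Proof.
have hM := range_subspace hT.
have [_ [[x [hx <-]] hmin]] := min_dist_exists hip y hcomp hM range_shift_closed.
set e := T x - y.
have horth z : D z -> ip (T z) e = 0.
  by move=> hz; apply: (min_dist_orth hip hM _ hmin); [exists x | exists z].
have [hDe hAe] : D e /\ A e = Num.conj l *: e.
  apply: (sa_adjointE hip hA) => z hz.
  have -> : A z = T z + l *: z by rewrite /T subrK.
  by rewrite (ipDl hip) horth // add0r (ipZl hip) (ipZr hip) conjCK.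
have := hlb_conj hDe; rewrite hAe subrr (sqnorm0 hip) mulr0 => he.
have e0 : e = 0 by apply: (sqnorm_eq0 hip); apply/le_anti; rewrite he sqnorm_ge0.
by exists x; split => //; apply/eqP; rewrite -subr_eq0 -/e e0.
Qed.

Lemma resolvent_of_lower_bound : in_resolvent ip D A l.
Proof.
have [S hS] := choice shift_surjective.
exists S; split => //.
- move=> x hx; apply/eqP; rewrite -subr_eq0; apply/eqP; apply: (sqnorm_eq0 hip).
  have hSx := (hS (T x)).1.
  have := hlb (domB hT hSx hx); rewrite -/(T _) (linB hT) // (hS (T x)).2 subrr.
  by rewrite (sqnorm0 hip) mulr0 => h; apply/le_anti; rewrite h sqnorm_ge0.
- apply: (bounded_of_sqnorm hip hK) => y.
  by have := hlb (hS y).1; rewrite -/(T _) (hS y).2.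
Qed.

End LowerBound.

Section Resolvent.
Variables (R : realType) (H : lmodType R[i]) (ip : H -> H -> R[i]).
Hypothesis hip : is_inner_product ip.
Local Notation sqnorm := (sqnorm ip).
Variables (D : H -> Prop) (A : H -> H).
Hypothesis hA : self_adjoint ip D A.

Definition resolvent_op (l : R[i]) (S : H -> H) :=
  [/\ forall y, D (S y) /\ A (S y) - l *: S y = y,
      forall x, D x -> S (A x - l *: x) = x & bounded ip S].

Lemma Im_ip_sa x : D x -> im (ip (A x) x) = 0.
Proof.
move=> hx; have : im (ip (A x) x) = - im (ip (A x) x).
  by rewrite {1}(sa_sym hA hx hx) (Im_ipC hip).
lra.
Qed.

Lemma sqnorm_shift_ge l x : D x -> im l ^+ 2 * sqnorm x <= sqnorm (A x - l *: x).
Proof.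
move=> hx; have := sqnorm_ge0 hip (A x - (re l)%:C%C *: x).
rewrite (sqnormB hip) (sqnormZ_real hip) (Re_ipZr hip) /= mul0r addr0.
rewrite (sqnormB hip) (sqnormZ hip) (Re_ipZr hip) (Im_ip_sa hx) mulr0 addr0.
lra.
Qed.

Lemma nonreal_resolvent l : is_complete ip -> im l != 0 -> in_resolvent ip D A l.
Proof.
move=> hc hl; have hl2 : 0 < im l ^+ 2 by rewrite lt0r sqrf_eq0 hl sqr_ge0.
have hlb l' : im l' ^+ 2 = im l ^+ 2 ->
    forall x, D x -> sqnorm x <= (im l ^+ 2)^-1 * sqnorm (A x - l' *: x).
  by move=> hl' x hx; rewrite ler_pdivlMl // -hl' sqnorm_shift_ge.
apply: (resolvent_of_lower_bound hip hc hA (K := (im l ^+ 2)^-1)).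
- by rewrite invr_ge0 ltW.
- exact: hlb.
- by apply: hlb; rewrite ImJc sqrrN.
Qed.

Section ResolventOp.
Variables (l : R[i]) (S : H -> H).
Hypothesis hS : resolvent_op l S.

Lemma resolvent_linear : linear_on (fun _ => True) S.
Proof.
have hT := linear_on_shift l (sa_linear hA).
split => // al u v _ _; case: hS => hS1 hS2 _.
have [hu1 hu2] := hS1 u; have [hv1 hv2] := hS1 v.
have hD := domDZ hT al hu1 hv1.
by rewrite -{1}hu2 -{1}hv2 -(linDZ hT) // hS2.
Qed.

Lemma resolvent_lower_bound :
  exists K, 0 <= K /\ forall x, D x -> sqnorm x <= K * sqnorm (A x - l *: x).
Proof.
case: hS => _ hS2 /(bounded_sqnorm hip)[K [hK hSK]].
by exists K; split => // x hx; rewrite -{1}(hS2 x hx).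
Qed.

End ResolventOp.

Lemma resolvent_sym (a : R) S : resolvent_op a%:C%C S -> forall u v, ip (S u) v = ip u (S v).
Proof.
case=> hS1 _ _ u v; have [hu1 hu2] := hS1 u; have [hv1 hv2] := hS1 v.
rewrite -{1}hv2 -{2}hu2 (ipBr hip) (ipBl hip) (ipZr hip) (ipZl hip) conjc_realC.
by rewrite (sa_sym hA hu1 hv1).
Qed.

End Resolvent.

Section PositiveOperator.
Variables (R : realType) (H : lmodType R[i]) (ip : H -> H -> R[i]).
Hypothesis hip : is_inner_product ip.
Local Notation sqnorm := (sqnorm ip).
Variables (P : H -> H) (K : R).
Hypothesis hPlin : linear_on (fun _ => True) P.
Hypothesis hPsym : forall x y, ip (P x) y = ip x (P y).
Hypothesis hPpos : forall x, 0 <= re (ip (P x) x).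
Hypothesis hK : 0 <= K.
Hypothesis hPK : forall x, sqnorm (P x) <= K * sqnorm x.

(* Expand [0 <= <P(x - s Px), x - s Px>] with [s = 2 / (K + 1)]. *)
Lemma sqnorm_pos_op_le x : sqnorm (P x) <= (K + 1) / 2 * re (ip (P x) x).
Proof.
set L := (K + 1) / 2.
have hL : 0 < L by rewrite /L divr_gt0 //; have := hK; lra.
have hPL y : re (ip (P y) y) <= L * sqnorm y.
  have := Re_ip_AMGM hip (P y) y ltr01; rewrite mul1r divr1.
  have := hPK y; rewrite /L => h1 h2.
  have E : (K + 1) / 2 * sqnorm y * 2 = K * sqnorm y + sqnorm y by field.
  nra.
set s := L^-1; have hs : 0 < s by rewrite invr_gt0.
have := hPpos (x - s%:C%C *: P x).
rewrite (linB hPlin) // (linZ hPlin) //.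
rewrite (ipBl hip) !(ipBr hip) !ReBc !(Re_ipZl hip) !(Re_ipZr hip) !(Im_ipZr hip) /=.
rewrite (hPsym (P x) x) -/(sqnorm (P x)) => h.
have h1 : s * (s * re (ip (P (P x)) (P x))) <= s * sqnorm (P x).
  have -> : s * sqnorm (P x) = s * (s * (L * sqnorm (P x))).
    by rewrite /s; field; rewrite gt_eqF.
  by do 2 (apply: ler_wpM2l; first exact: ltW).
have h2 : s * sqnorm (P x) <= re (ip (P x) x) by lra.
by rewrite -(ler_pM2l hs) mulrA mulVf ?gt_eqF // mul1r.
Qed.

End PositiveOperator.

Section Perturbation.
Variables (R : realType) (H : lmodType R[i]) (ip : H -> H -> R[i]).
Hypothesis hip : is_inner_product ip.
Local Notation sqnorm := (sqnorm ip).
Variables (D : H -> Prop) (A B : H -> H).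
Hypothesis hA : self_adjoint ip D A.
Hypothesis hB : self_adjoint ip (fun _ => True) B.
Hypothesis hBb : bounded ip B.
Hypothesis hBpos : nonneg_op ip B.

Let hBlin : linear_on (fun _ => True) B := sa_linear hB.
Let hBsym x y : ip (B x) y = ip x (B y) := sa_sym hB I I.
Let hBpos_re x : 0 <= re (ip (B x) x) := (ge0_complexE (hBpos x)).2.

Lemma sqnorm_B_le_form : exists LB, 0 < LB /\ forall x, sqnorm (B x) <= LB * re (ip (B x) x).
Proof.
have [KB [hKB hBK]] := bounded_sqnorm hip hBb.
exists ((KB + 1) / 2); split; first by rewrite divr_gt0 //; lra.
exact: (sqnorm_pos_op_le (K := KB) hip hBlin hBsym hBpos_re hKB hBK).
Qed.

Section SignedForm.
Variables (a : R) (S : H -> H).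
Hypothesis hS : resolvent_op ip D A a%:C%C S.
Hypothesis hpert : forall t : R, in_resolvent ip D (fun x => A x + t%:C%C *: B x) a%:C%C.
Variable sg : R.
Hypothesis hsg : sg ^+ 2 = 1.

Let Q x := sg * re (ip (S (B x)) (B x)).
Let b x := re (ip (B x) x).

Lemma signed_form_le : exists C, forall x, Q x <= C * b x.
Proof.
have [LB [hLB hBL]] := sqnorm_B_le_form.
have [KS [hKS hSK]] : exists KS, 0 <= KS /\ forall y, sqnorm (S y) <= KS * sqnorm y.
  by apply: (bounded_sqnorm hip); case: hS.
exists ((KS + 1) / 2 * LB) => x.
have := Re_ip_AMGM hip (sg%:C%C *: S (B x)) (B x) ltr01.
rewrite mul1r divr1 (sqnormZ_real hip) hsg mul1r (Re_ipZl hip) /= mul0r subr0.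
have h : (KS + 1) * sqnorm (B x) <= (KS + 1) * (LB * b x).
  by rewrite ler_wpM2l //; lra.
have -> : (KS + 1) / 2 * LB * b x = (KS + 1) * (LB * b x) / 2 by field.
by rewrite ler_pdivlMr // /Q; have := hSK (B x); lra.
Qed.

Variable x0 : H.
Hypothesis hx0 : 0 < Q x0.

Let V := [set r : R | exists x, 0 < b x /\ r = Q x / b x]%classic.
Let q := sup V.

Lemma signed_form_b_gt0 x : 0 < Q x -> 0 < b x.
Proof.
move=> hQ; rewrite lt_neqAle hBpos_re andbT; apply/eqP => hb0.
have [C hC] := signed_form_le; have := hC x; rewrite -hb0 mulr0.
by rewrite leNgt hQ.
Qed.

Lemma has_sup_ratio : has_sup V.
Proof.
have [C hC] := signed_form_le.
split; first by exists (Q x0 / b x0), x0; split => //; exact: signed_form_b_gt0.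
by exists C => _ [x [hx ->]]; rewrite ler_pdivrMr.
Qed.

Lemma signed_form_le_sup x : Q x <= q * b x.
Proof.
have [hb0|hb] := eqVneq (b x) 0.
  by have [C hC] := signed_form_le; rewrite hb0 mulr0; have := hC x; rewrite hb0 mulr0.
have hbx : 0 < b x by rewrite lt_neqAle eq_sym hb hBpos_re.
by rewrite -ler_pdivrMr //; apply: sup_upper_bound has_sup_ratio _ _; exists x.
Qed.

Lemma sup_ratio_gt0 : 0 < q.
Proof.
have hb := signed_form_b_gt0 hx0.
apply: lt_le_trans (divr_gt0 hx0 hb) _.
by apply: sup_upper_bound has_sup_ratio _ _; exists x0.
Qed.

Lemma sup_ratio_approx e : 0 < e -> exists x, b x = 1 /\ q - e < Q x.
Proof.
move=> he; have [_ [x [hbx ->]] hlt] := sup_adherent he has_sup_ratio.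
set rho := (Num.sqrt (b x))^-1.
have hrho2 : rho ^+ 2 = (b x)^-1 by rewrite /rho exprVn sqr_sqrtr // ltW.
have hSlin := resolvent_linear hA hS.
have hBrho : B (rho%:C%C *: x) = rho%:C%C *: B x by rewrite (linZ hBlin).
exists (rho%:C%C *: x); split.
  by rewrite /b hBrho (Re_ipZ_real hip) hrho2 mulVf // gt_eqF.
rewrite /Q hBrho (linZ hSlin) // (Re_ipZ_real hip) hrho2.
by rewrite mulrCA mulrC -/(Q x).
Qed.

Let P x := q%:C%C *: B x + (- sg)%:C%C *: B (S (B x)).

Lemma Re_ip_gap x : re (ip (P x) x) = q * b x - Q x.
Proof.
rewrite /P (ipDl hip) ReDc !(Re_ipZl hip) /= !mul0r !subr0 (hBsym (S (B x))).
by rewrite /b /Q mulNr.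
Qed.

Lemma sqnorm_gap_le : exists LP, 0 < LP /\ forall x, sqnorm (P x) <= LP * (q * b x - Q x).
Proof.
have hSlin := resolvent_linear hA hS.
have hSb : bounded ip S by case: hS.
have hPlin : linear_on (fun _ => True) P.
  exact: linear_on_lincomb hBlin (linear_on_comp hBlin (linear_on_comp hSlin hBlin)).
have hPb : bounded ip P.
  exact: (bounded_lincomb hip _ _ hBb (bounded_comp hip hBb (bounded_comp hip hSb hBb))).
have [KP [hKP hPK]] := bounded_sqnorm hip hPb.
have hPsym x y : ip (P x) y = ip x (P y).
  rewrite /P (ipDl hip) (ipDr hip) !(ipZl hip) !(ipZr hip) !conjc_realC.
  by rewrite !hBsym (resolvent_sym hip hA hS) hBsym.
have hPpos x : 0 <= re (ip (P x) x).
  by rewrite Re_ip_gap subr_ge0 signed_form_le_sup.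
exists ((KP + 1) / 2); split; first by rewrite divr_gt0 //; lra.
by move=> x; rewrite -Re_ip_gap; exact: (sqnorm_pos_op_le (K := KP) hip hPlin).
Qed.

Lemma perturbed_shift_SB x :
  A (S (B x)) + (- sg / q)%:C%C *: B (S (B x)) - a%:C%C *: S (B x) = (q^-1)%:C%C *: P x.
Proof.
case: hS => hS1 _ _; have hq := sup_ratio_gt0.
rewrite addrAC (hS1 (B x)).2 /P scalerDr !scalerA -!rmorphM /= mulVf ?gt_eqF //.
by rewrite scale1r mulrC.
Qed.

(* With [t = - sg / q] and [x] a near-maximiser, [(A + t B - a) (S (B x)) = P x / q] is
   small, so [S (B x)] is small as [A + t B - a] has a bounded inverse; yet [Q x] stays
   close to [q > 0]. *)
Lemma signed_form_gt0_absurd : False.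
Proof.
have hq := sup_ratio_gt0.
have [LB [hLB hBL]] := sqnorm_B_le_form.
have [LP [hLP hPL]] := sqnorm_gap_le.
case: (hpert (- sg / q)) => S' hS'.
have [KS' [hKS' hu]] := resolvent_lower_bound hip (A := fun y => A y + (- sg / q)%:C%C *: B y) hS'.
set X := LB * KS' * LP.
have hX : 0 <= X by rewrite /X !mulr_ge0 // ltW.
have hq3 : 0 < q ^+ 3 := exprn_gt0 3 hq.
set e := q / (4 * (1 + X / q ^+ 3)).
have hden : 0 < 4 * (1 + X / q ^+ 3) by have := divr_ge0 hX (ltW hq3); lra.
have he : 0 < e by rewrite divr_gt0.
have [x [hbx hQx]] := sup_ratio_approx he.
have hDu : D (S (B x)) by case: hS => hS1 _ _; exact: (hS1 (B x)).1.
have hu_small : sqnorm (S (B x)) <= KS' * (q ^- 2 * (LP * e)).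
  apply: le_trans (hu _ hDu) _; rewrite /= perturbed_shift_SB (sqnormZ_real hip).
  rewrite ler_wpM2l // exprVn; apply: ler_wpM2l; first by rewrite invr_ge0 exprn_ge0 // ltW.
  apply: le_trans (hPL x) _; rewrite hbx mulr1; apply: ler_wpM2l; first exact: ltW.
  lra.
have hQ_le : Q x <= LB / q * sqnorm (S (B x)) + q / 4.
  have heta : 0 < 2 * LB / q by rewrite divr_gt0 // mulr_gt0.
  have := Re_ip_AMGM hip (sg%:C%C *: S (B x)) (B x) heta.
  rewrite (sqnormZ_real hip) hsg mul1r (Re_ipZl hip) /= mul0r subr0 -/(Q x).
  have : sqnorm (B x) / (2 * LB / q) <= q / 2.
    rewrite ler_pdivrMr //; have := hBL x; rewrite -/(b x) hbx mulr1 => h.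
    by have -> : q / 2 * (2 * LB / q) = LB by field; rewrite gt_eqF.
  have -> : 2 * LB / q * sqnorm (S (B x)) = 2 * (LB / q * sqnorm (S (B x))) by ring.
  lra.
have hXe : LB / q * sqnorm (S (B x)) <= X * e / q ^+ 3.
  have -> : X * e / q ^+ 3 = LB / q * (KS' * (q ^- 2 * (LP * e))).
    by rewrite /X; field; rewrite gt_eqF.
  by rewrite ler_wpM2l // divr_ge0 // ltW.
have hsum : e + X * e / q ^+ 3 = q / 4.
  by rewrite /e; field; rewrite !gt_eqF //; have := divr_ge0 hX (ltW hq3); lra.
lra.
Qed.

End SignedForm.

Lemma resolvent_form_eq0 (a : R) S : resolvent_op ip D A a%:C%C S ->
  (forall t : R, in_resolvent ip D (fun x => A x + t%:C%C *: B x) a%:C%C) ->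
  forall x, re (ip (S (B x)) (B x)) = 0.
Proof.
move=> hS hpert.
have hle sg : sg ^+ 2 = 1 -> forall x, sg * re (ip (S (B x)) (B x)) <= 0.
  move=> hsg x; rewrite leNgt; apply/negP => hx.
  exact: (signed_form_gt0_absurd (x0 := x) hS hpert hsg hx).
move=> x; apply/le_anti; rewrite -[X in X <= 0]mul1r hle ?expr1n //=.
by rewrite -oppr_le0 -mulN1r hle // sqrrN expr1n.
Qed.

End Perturbation.

Section RealShift.
Variables (R : realType) (H : lmodType R[i]) (ip : H -> H -> R[i]).
Hypothesis hip : is_inner_product ip.
Local Notation sqnorm := (sqnorm ip).

Lemma sqnorm_le_perturb (K d : R) (x u : H) : 0 <= K -> K * d ^+ 2 <= 4^-1 ->
  sqnorm x <= K * sqnorm u -> sqnorm x <= 4 * K * sqnorm (u - d%:C%C *: x).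
Proof.
move=> hK hd hx.
have := sqnormD_le2 hip (u - d%:C%C *: x) (d%:C%C *: x); rewrite subrK (sqnormZ_real hip).
set v := sqnorm (u - _) => hu.
have h1 : K * sqnorm u <= 2 * (K * v) + 2 * (K * d ^+ 2 * sqnorm x).
  have -> : 2 * (K * v) + 2 * (K * d ^+ 2 * sqnorm x) =
      K * (2 * v + 2 * (d ^+ 2 * sqnorm x)) by ring.
  exact: ler_wpM2l.
have h2 : K * d ^+ 2 * sqnorm x <= 4^-1 * sqnorm x by rewrite ler_wpM2r // sqnorm_ge0.
have -> : 4 * K * v = 4 * (K * v) by ring.
lra.
Qed.

Variables (D : H -> Prop) (A : H -> H).
Hypothesis hA : self_adjoint ip D A.

Lemma resolvent_real_shift (a d KS : R) S : is_complete ip ->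
  resolvent_op ip D A a%:C%C S -> 0 <= KS -> (forall y, sqnorm (S y) <= KS * sqnorm y) ->
  KS * d ^+ 2 <= 4^-1 -> in_resolvent ip D A (a + d)%:C%C.
Proof.
move=> hc [_ hS2 _] hKS hSK hd.
have hlb x : D x -> sqnorm x <= 4 * KS * sqnorm (A x - (a + d)%:C%C *: x).
  move=> hx; rewrite rmorphD /= scalerDl opprD addrA.
  by apply: (sqnorm_le_perturb hKS hd); rewrite -{1}(hS2 x hx).
apply: (resolvent_of_lower_bound hip hc hA (K := 4 * KS)); first exact: mulr_ge0.
  exact: hlb.
by rewrite conjc_realC; exact: hlb.
Qed.

End RealShift.

Section TwoResolvents.
Variables (R : realType) (H : lmodType R[i]) (ip : H -> H -> R[i]).
Hypothesis hip : is_inner_product ip.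
Local Notation sqnorm := (sqnorm ip).
Variables (D : H -> Prop) (A : H -> H).
Hypothesis hA : self_adjoint ip D A.
Variables (a d KS : R) (S S' : H -> H).
Hypothesis hS : resolvent_op ip D A a%:C%C S.
Hypothesis hS' : resolvent_op ip D A (a + d)%:C%C S'.
Hypothesis hd : d != 0.
Hypothesis hSK : forall y, sqnorm (S y) <= KS * sqnorm y.
Hypothesis hKSd : KS * d ^+ 2 <= 4^-1.

(* With [v = S y] and [v' = S' y], the resolvent identity gives [v - v' = S (- d v')] and
   the two vanishing forms give [Re <v', v> = 0]; as [KS d^2 <= 1/4] this forces [v' = 0]. *)
Lemma eq0_of_resolvent_forms y :
  re (ip (S y) y) = 0 -> re (ip (S' y) y) = 0 -> y = 0.
Proof.
move=> hSy hS'y; case: hS => hS1 hS2 _; case: hS' => hS'1 _ _.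
have [hv hAv] := hS1 y; have [hv' hAv'] := hS'1 y.
set v := S y in hv hAv hSy *; set v' := S' y in hv' hAv' hS'y *.
have hAv'E : A v' - a%:C%C *: v' = y + d%:C%C *: v'.
  by rewrite -hAv' rmorphD /= scalerDl opprD addrA subrK.
have hvv : re (ip v' v) = 0.
  have E : ip v' y = ip y v + d%:C%C * ip v' v.
    rewrite -{1}hAv (ipBr hip) (ipZr hip) conjc_realC -(sa_sym hA hv' hv).
    by rewrite -[a%:C%C * _](ipZl hip) -(ipBl hip) hAv'E (ipDl hip) (ipZl hip).
  move: E => /(congr1 (@complex.Re R)); rewrite ReDc ReMc /= mul0r subr0 hS'y.
  rewrite (Re_ipC hip v) hSy add0r => /esym /eqP.
  by rewrite mulf_eq0 (negbTE hd) => /eqP.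
have hdiff : v - v' = S ((- d)%:C%C *: v').
  have hT := linear_on_shift a%:C%C (sa_linear hA).
  rewrite -(hS2 _ (domB hT hv hv')); congr S.
  have := linB hT hv hv'; rewrite /= => ->.
  by rewrite hAv hAv'E opprD addrA subrr add0r rmorphN scaleNr.
have hvv'_small : sqnorm (v' - v) <= 4^-1 * sqnorm v'.
  rewrite -opprB (sqnormN hip) hdiff; apply: le_trans (hSK _) _.
  rewrite (sqnormZ_real hip) sqrrN mulrA; apply: ler_wpM2r => //; exact: sqnorm_ge0.
have hv'0 : sqnorm v' <= 0.
  have h2 : 0 < 2^-1 :> R by rewrite invr_gt0.
  have := Re_ip_AMGM hip v' (v' - v) h2.
  by rewrite invrK (ipBr hip) ReBc hvv subr0 -/(sqnorm v'); lra.
rewrite -hAv'.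
have -> : v' = 0 by apply: (sqnorm_eq0 hip); apply/le_anti; rewrite hv'0 sqnorm_ge0.
by rewrite (lin0 (sa_linear hA)) scaler0 subr0.
Qed.

End TwoResolvents.

Section Conclusion.
Variables (R : realType) (H : lmodType R[i]) (ip : H -> H -> R[i]).
Hypothesis hip : is_inner_product ip.
Hypothesis hcomp : is_complete ip.
Variables (D : H -> Prop) (A B : H -> H).
Hypothesis hA : self_adjoint ip D A.
Hypothesis hB : self_adjoint ip (fun _ => True) B.
Hypothesis hBb : bounded ip B.
Hypothesis hBpos : nonneg_op ip B.

Lemma B_eq0_of_real_resolvent (a : R) : in_resolvent ip D A a%:C%C ->
  (forall t a' : R, in_resolvent ip D A a'%:C%C ->
     in_resolvent ip D (fun x => A x + t%:C%C *: B x) a'%:C%C) ->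
  forall x, B x = 0.
Proof.
move=> [S hS] hpert.
have [KS [hKS hSK]] : exists KS, 0 <= KS /\ forall y, sqnorm ip (S y) <= KS * sqnorm ip y.
  by apply: (bounded_sqnorm hip); case: hS.
set d := (2 * (KS + 1))^-1.
have hKS1 : 0 < 2 * (KS + 1) by have := hKS; lra.
have hd : 0 < d by rewrite invr_gt0.
have hKSd : KS * d ^+ 2 <= 4^-1.
  have hdw : d * (2 * (KS + 1)) = 1 by rewrite /d mulVf // gt_eqF.
  have := hKS; nra.
have [S' hS'] := resolvent_real_shift hip hA hcomp hS hKS hSK hKSd.
move=> x; apply: (eq0_of_resolvent_forms hip hA hS hS' (lt0r_neq0 hd) hSK hKSd).
  exact: (resolvent_form_eq0 hip hA hB hBb hBpos hS (fun t => hpert t a (ex_intro _ S hS))).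
exact: (resolvent_form_eq0 hip hA hB hBb hBpos hS' (fun t => hpert t _ (ex_intro _ S' hS'))).
Qed.

End Conclusion.

Unset Implicit Arguments.

Theorem corollary1p2 (R : realType) (H : lmodType R[i]) (ip : H -> H -> R[i])
  (hH : is_hilbert ip)
  (DA : H -> Prop) (A B : H -> H)
  (hA : self_adjoint ip DA A)
  (hB : self_adjoint ip (fun _ => True) B)
  (hBb : bounded ip B)
  (hBpos : nonneg_op ip B)
  (hspec : forall t : R[i], t \is Num.real -> forall l : R[i],
      in_spectrum ip DA (fun x => A x + t *: B x) l <-> in_spectrum ip DA A l) :
  (forall x : H, B x = 0) \/
  (forall l : R[i], in_spectrum ip DA A l <-> l \is Num.real).
Proof.
case: hH => hip hcomp.
have [hB0|hBn0] := EM (forall x : H, B x = 0); [by left | right].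
have hpert (t a : R) : in_resolvent ip DA A a%:C%C ->
    in_resolvent ip DA (fun x => A x + t%:C%C *: B x) a%:C%C.
  move=> hres; apply: contrapT => hspt.
  by apply: (hspec t%:C%C _ a%:C%C).1 hspt hres; rewrite complex_real.
case=> a b; rewrite complex_real; have [->|hb] := eqVneq b 0.
  split=> // _ hres; apply: hBn0.
  exact: (B_eq0_of_real_resolvent hip hcomp hA hB hBb hBpos (a := a) hres hpert).
by split=> // hspa; exfalso; apply/hspa/(nonreal_resolvent hip hA (l := (a +i* b)%C) hcomp).
Qed.
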